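(* Let $\tilde L$ be a minimum-size counterexample. Then $\tilde L$ contains at most one doubly irreducible element.
   Context: For a poset $P$, $x$ upper covers $y$ (and $y$ lower covers $x$) if $y<x$ with nothing strictly between. Join-irreducible: upper covers exactly one element; meet-irreducible: lower covers exactly one element; doubly irreducible: both. For $x\in P$, ${\uparrow}x=\{y: x\le y\}$. A counterexample is a finite lattice $L$ with $|L|>1$ in which every join-irreducible $j$ satisfies $|{\uparrow}j|>|L|/2$; a minimum-size counterexample is a counterexample $\tilde L$ such that no counterexample has fewer elements. *)

From mathcomp Require Import all_boot all_order.
Set Implicit Arguments. Unset Strict Implicit. Unset Printing Implicit Defensive.
Import Order.Theory.
Local Open Scope order_scope.

Definition covers (d : Order.disp_t) (T : finPOrderType d) (x y : T) : bool :=
  (y < x) && [forall z : T, ~~ ((y < z) && (z < x))].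

Definition join_irr (d : Order.disp_t) (T : finPOrderType d) (x : T) : bool :=
  #|[set y : T | covers x y]| == 1%N.

Definition meet_irr (d : Order.disp_t) (T : finPOrderType d) (x : T) : bool :=
  #|[set y : T | covers y x]| == 1%N.

Definition doubly_irr (d : Order.disp_t) (T : finPOrderType d) (x : T) : bool :=
  join_irr x && meet_irr x.

Definition upset (d : Order.disp_t) (T : finPOrderType d) (x : T) : {set T} :=
  [set y : T | x <= y].

Definition counterexample (d : Order.disp_t) (L : finLatticeType d) : Prop :=
  (1 < #|L|)%N /\ forall j : L, join_irr j -> (#|L| < 2 * #|upset j|)%N.

Definition min_counterexample (d : Order.disp_t) (L : finLatticeType d) : Prop :=
  counterexample L /\
  forall (d' : Order.disp_t) (L' : finLatticeType d'),
    counterexample L' -> (#|L| <= #|L'|)%N.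

(* If x <> y were doubly irreducible in a counterexample L, then L without
   x and y would be a sublattice (a doubly irreducible element is neither a
   proper meet nor a proper join) with |L| - 2 elements.  A join-irreducible
   j of it is join-irreducible in L unless it covers x or y, and if j covers
   x then, x being meet-irreducible, up x = {x} + up j.  So up j \ {x, y} is
   U \ {x, y} for an up-set U of size > |L|/2; removing x and y loses at most
   one element of U unless U strictly contains the up-set of x or of y, hence
   2 |up j \ {x, y}| > |L| - 2 and the sublattice is a smaller counterexample. *)

From HB Require Import structures.
From mathcomp Require Import all_boot all_order zify.
Set Implicit Arguments. Unset Strict Implicit. Unset Printing Implicit Defensive.
Import Order.Theory.
Local Open Scope order_scope.

(* Implicit arguments of [#|A|] may elaborate to different but convertible
   terms, which [lia] would treat as distinct atoms: abstract them first. *)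
Ltac card_lia :=
  repeat match goal with H : context [card.body _] |- _ => revert H end;
  repeat match goal with |- context [@card.body ?T ?A] =>
    let c := fresh "c" in set c := @card.body T A; clearbody c end;
  intros; lia.

Lemma card_setD2 (T : finType) (A : {set T}) (x y : T) : x != y ->
  #|A| = (x \in A) + (y \in A) + #|A :\: [set x; y]|.
Proof.
move=> xy; rewrite (cardsD1 x) (cardsD1 y (A :\ x)) setDDl in_setD1 eq_sym xy.
by rewrite addnA.
Qed.

Section FinitePoset.
Variables (d : Order.disp_t) (T : finPOrderType d).
Implicit Types a b x z w : T.

Lemma card_upset_lt a b : a < b -> (#|upset b| < #|upset a|)%N.
Proof.
move=> ab; apply: proper_card; apply/properP; split.
  by apply/subsetP => z; rewrite !inE; apply: le_trans (ltW ab).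
by exists a; rewrite !inE ?lexx ?lt_geF.
Qed.

Lemma covers_lt x y : covers x y -> y < x.
Proof. by case/andP. Qed.

Lemma covers_intro x y :
  y < x -> (forall z, y < z -> z < x -> False) -> covers x y.
Proof.
by move=> yx noz; rewrite /covers yx; apply/forallP => z; apply/negP => /andP[] /noz.
Qed.

Lemma exists_lower_cover z w : z < w -> exists2 c, z <= c & covers w c.
Proof.
move=> zw; have zP : (z <= z) && (z < w) by rewrite lexx zw.
have [c /andP[zc cw] cmin] := @arg_minnP T z
  (fun t => (z <= t) && (t < w)) (fun t => #|upset t|) zP.
exists c => //; apply: covers_intro => // t ct tw.
have := cmin t; rewrite (le_trans zc (ltW ct)) tw => /(_ isT).
by rewrite leqNgt card_upset_lt.
Qed.

Lemma exists_upper_cover z w : z < w -> exists2 c, covers c z & c <= w.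
Proof.
move=> zw; have wP : (z < w) && (w <= w) by rewrite zw lexx.
have [c /andP[zc cw] cmax] := @arg_maxnP T w
  (fun t => (z < t) && (t <= w)) (fun t => #|upset t|) wP.
exists c => //; apply: covers_intro => // t zt tc.
have := cmax t; rewrite zt (le_trans (ltW tc) cw) => /(_ isT).
by rewrite /geq /= leqNgt card_upset_lt.
Qed.

Lemma card_upset_setD2 (n : nat) a x y : x != y ->
  (n < 2 * #|upset a|)%N -> (n < 2 * #|upset x|)%N -> (n < 2 * #|upset y|)%N ->
  (n < 2 * #|upset a :\: [set x; y]| + 2)%N.
Proof.
move=> xy ha hx hy.
have : #|upset a| = (x \in upset a) + (y \in upset a) + #|upset a :\: [set x; y]|.
  exact: card_setD2.
case xa: (x \in upset a); case ya: (y \in upset a) => /= e; try card_lia.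
case: (eqVneq x a) => [ax | xa'].
  subst a; have : (#|upset y| < #|upset x|)%N.
    by apply: card_upset_lt; rewrite lt_neqAle xy; move: ya; rewrite inE.
  card_lia.
have : (#|upset x| < #|upset a|)%N.
  by apply: card_upset_lt; rewrite lt_neqAle eq_sym xa'; move: xa; rewrite inE.
card_lia.
Qed.

Lemma join_irr_lower_cover x : join_irr x -> exists l, covers x l.
Proof.
move=> /cards1P[l hl]; exists l.
have : l \in [set t | covers x t] by rewrite hl set11.
by rewrite inE.
Qed.

Lemma meet_irr_upper_cover x : meet_irr x -> exists u, covers u x.
Proof.
move=> /cards1P[u hu]; exists u.
have : u \in [set t | covers t x] by rewrite hu set11.
by rewrite inE.
Qed.

Lemma join_irr_lt_le_cover x l z : join_irr x -> covers x l -> z < x -> z <= l.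
Proof.
move=> /cards1P[c hc] hl /exists_lower_cover[c' zc' hc'].
have uniq_c t : covers x t -> t = c by move=> ht; apply/set1P; rewrite -hc inE.
by rewrite (uniq_c _ hl) -(uniq_c _ hc').
Qed.

Lemma meet_irr_gt_ge_cover x u z : meet_irr x -> covers u x -> x < z -> u <= z.
Proof.
move=> /cards1P[c hc] hu /exists_upper_cover[c' hc' c'z].
have uniq_c t : covers t x -> t = c by move=> ht; apply/set1P; rewrite -hc inE.
by rewrite (uniq_c _ hu) -(uniq_c _ hc').
Qed.

Lemma upset_meet_irr_cover x u : meet_irr x -> covers u x -> upset x = x |: upset u.
Proof.
move=> mx hu; apply/setP => z; rewrite !inE.
case: (eqVneq z x) => [-> | zx] /=; first by rewrite lexx.
apply/idP/idP => [xz | uz].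
  by apply: meet_irr_gt_ge_cover mx hu _; rewrite lt_neqAle eq_sym zx.
exact: le_trans (ltW (covers_lt hu)) uz.
Qed.

Lemma upset_cover_setD x u (C : {set T}) :
  meet_irr x -> covers u x -> x \in C -> upset u :\: C = upset x :\: C.
Proof.
move=> mx hu xC; rewrite (upset_meet_irr_cover mx hu); apply/setP => z; rewrite !inE.
by case: eqVneq => // ->; rewrite xC.
Qed.

Lemma card_upset_not_le u w : join_irr w -> ~~ (u <= w) -> (#|upset u| + 2 <= #|T|)%N.
Proof.
move=> /join_irr_lower_cover[l hl] uw; have lw := covers_lt hl.
have : upset u \subset ~: [set w; l].
  apply/subsetP => z; rewrite !inE negb_or => uz; apply/andP; split.
    by apply: contraNneq uw => <-.
  by apply: contraNneq uw => zl; rewrite (le_trans _ (ltW lw)) // -zl.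
move/subset_leq_card; have := cardsC [set w; l]; rewrite cards2 gt_eqF //.
card_lia.
Qed.

End FinitePoset.

Section Lattice.
Variables (d : Order.disp_t) (L : finLatticeType d).
Implicit Types a b x : L.

Lemma meet_irr_meet_neq x a b : meet_irr x -> a != x -> b != x -> a `&` b != x.
Proof.
move=> mx ax bx; apply/eqP => abx; have [u hu] := meet_irr_upper_cover mx.
have xu := covers_lt hu.
have le_u c : c != x -> x <= c -> u <= c.
  by move=> cx xc; apply: meet_irr_gt_ge_cover mx hu _; rewrite lt_neqAle eq_sym cx.
have : u <= a `&` b by rewrite lexI !le_u // -abx (leIl, leIr).
by rewrite abx lt_geF.
Qed.

Lemma join_irr_join_neq x a b : join_irr x -> a != x -> b != x -> a `|` b != x.
Proof.
move=> jx ax bx; apply/eqP => abx; have [l hl] := join_irr_lower_cover jx.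
have lx := covers_lt hl.
have le_l c : c != x -> c <= x -> c <= l.
  by move=> cx cx'; apply: join_irr_lt_le_cover jx hl _; rewrite lt_neqAle cx.
have : a `|` b <= l by rewrite leUx !le_l // -abx (leUl, leUr).
by rewrite abx lt_geF.
Qed.

End Lattice.

Section SubLattice.
Variables (d : Order.disp_t) (L : finLatticeType d) (A : {set L}).
Variables (meetA : meet_closed (fun z => z \in A))
          (joinA : join_closed (fun z => z \in A)).

(* The closure proofs are arguments of the type only so that the lattice
   instance below can be attached to it. *)
Definition sublattice of meet_closed (fun z => z \in A)
                       & join_closed (fun z => z \in A) := {z : L | z \in A}.
Local Notation S := (sublattice meetA joinA).
HB.instance Definition _ := Finite.copy S {z : L | z \in A}.
HB.instance Definition _ := SubType.copy S {z : L | z \in A}.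
HB.instance Definition _ :=
  Order.SubChoice_isSubLattice.Build d L (fun z => z \in A) d S meetA joinA.

Lemma card_sublattice : #|{: S}| = #|A|.
Proof. exact: card_sig. Qed.

Lemma card_upset_sublattice (s : S) : #|upset s| = #|upset (val s) :&: A|.
Proof.
rewrite -(card_imset _ val_inj); apply: eq_card => z; apply/imsetP/idP.
  by move=> [t]; rewrite !inE -Order.le_val => st ->; rewrite st (valP t).
by rewrite !inE => /andP[sz zA]; exists (Sub z zA); rewrite ?inE -?Order.le_val ?SubK.
Qed.

Section Covers.
Variable s : S.
Hypothesis covered_in : forall t, covers (val s) t -> t \in A.

Lemma covers_sublattice (c : S) : covers s c = covers (val s) (val c).
Proof.
rewrite /covers -Order.SubPreorderTheory.lt_val; congr andb.
apply/forallP/forallP => noz z.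
  apply/negP => /andP[cz zs].
  have [w zw /[dup] sw /covered_in wA] := exists_lower_cover zs.
  have := noz (Sub w wA); rewrite -!Order.SubPreorderTheory.lt_val SubK.
  by rewrite (lt_le_trans cz zw) (covers_lt sw).
by have := noz (val z); rewrite !Order.SubPreorderTheory.lt_val.
Qed.

Lemma join_irr_sublattice : join_irr s = join_irr (val s).
Proof.
rewrite /join_irr -(card_imset _ val_inj); congr (_ == 1)%N; apply: eq_card => t.
rewrite inE; apply/imsetP/idP => [[c] | st].
  by rewrite inE covers_sublattice => ? ->.
by exists (Sub t (covered_in st)); rewrite ?inE ?covers_sublattice SubK.
Qed.

End Covers.

End SubLattice.

Section TwoDoublyIrreducible.
Variables (d : Order.disp_t) (L : finLatticeType d) (x y : L).
Hypotheses (dx : doubly_irr x) (dy : doubly_irr y) (xy : x != y).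

Lemma meet_closed_setC2 : meet_closed (fun z => z \in ~: [set x; y]).
Proof.
have [[_ mx] [_ my]] := (andP dx, andP dy).
move=> a b; rewrite !inE !negb_or => /andP[ax ay] /andP[bx by_].
by rewrite !meet_irr_meet_neq.
Qed.

Lemma join_closed_setC2 : join_closed (fun z => z \in ~: [set x; y]).
Proof.
have [[jx _] [jy _]] := (andP dx, andP dy).
move=> a b; rewrite !inE !negb_or => /andP[ax ay] /andP[bx by_].
by rewrite !join_irr_join_neq.
Qed.

Hypothesis ceL : counterexample L.

Lemma four_lt_card : (4 < #|L|)%N.
Proof.
have [[jx _] [jy _]] := (andP dx, andP dy).
have [u ju uu] : exists2 u : L, join_irr u & (#|upset u| + 2 <= #|L|)%N.
  case: (boolP (x <= y)) => [le_xy | nle_xy]; last first.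
    by exists x; last exact: card_upset_not_le jy nle_xy.
  exists y => //; apply: card_upset_not_le jx _.
  by apply: contraNN xy => le_yx; rewrite eq_le le_xy le_yx.
have := ceL.2 u ju; card_lia.
Qed.

Lemma counterexample_setC2 :
  counterexample (sublattice meet_closed_setC2 join_closed_setC2).
Proof.
rewrite /counterexample card_sublattice.
have := cardsC [set x; y]; rewrite cards2 xy /= => cardC.
split; first by have := four_lt_card; card_lia.
move=> j jj; rewrite card_upset_sublattice -setDE.
suff : (#|L| < 2 * #|upset (val j) :\: [set x; y]| + 2)%N by card_lia.
have [[jx mx] [jy my]] := (andP dx, andP dy).
have [ux uy] := (ceL.2 x jx, ceL.2 y jy).
case: (boolP (covers (val j) x)) => [cjx | ncjx].
  by rewrite (upset_cover_setD mx cjx (set21 x y)); exact: card_upset_setD2.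
case: (boolP (covers (val j) y)) => [cjy | ncjy].
  rewrite (upset_cover_setD my cjy (set22 x y)) setUC.
  by apply: card_upset_setD2; rewrite // eq_sym.
rewrite join_irr_sublattice in jj; last first.
  move=> t ct; rewrite !inE negb_or; apply/andP; split.
    by apply: contraNneq ncjx => tx; rewrite tx in ct.
  by apply: contraNneq ncjy => ty; rewrite ty in ct.
exact: card_upset_setD2 (ceL.2 _ jj) ux uy.
Qed.

End TwoDoublyIrreducible.

Theorem theorem2p6 (d : Order.disp_t) (L : finLatticeType d) :
  min_counterexample L -> (#|[set x : L | doubly_irr x]| <= 1)%N.
Proof.
move=> [ceL minL]; rewrite leqNgt; apply/negP => /card_gt1P[x [y [dx dy xy]]].
rewrite !inE in dx dy.
have := minL _ _ (counterexample_setC2 dx dy xy ceL).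
have := cardsC [set x; y]; rewrite cards2 xy card_sublattice; card_lia.
Qed.
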